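(* Assume $Spr(\beta)$. (i) For each $\alpha\in\mathcal{F}_\beta$: $\alpha$ is an isolated point of $\mathcal{F}_\beta$ if and only if $\alpha$ is a decidable point of $\mathcal{F}_\beta$. (ii) The set $\mathcal{I}(\mathcal{F}_\beta)$ of isolated points of $\mathcal{F}_\beta$ is a definable subset of the structure $(\mathcal{F}_\beta,=)$.
   Context: Intuitionistic mathematics (constructive reading of logical constants; Markov's Principle not assumed), with Brouwer's Continuity Principle as an axiom: for every $R\subseteq\mathcal{N}\times\omega$, if $\forall\alpha\exists n[\alpha R n]$, then $\forall\alpha\exists m\exists n\forall\beta[\overline{\alpha}m\sqsubset\beta\rightarrow\beta R n]$. $\mathcal{N}=\omega^\omega$; finite sequences of naturals are coded by naturals, $\overline{\alpha}m=\langle\alpha(0),\dots,\alpha(m-1)\rangle$, $s\sqsubset\gamma$ means $s$ is an initial segment of $\gamma$. $\mathcal{F}_\beta:=\{\alpha\mid\forall n[\beta(\overline{\alpha}n)=0]\}$; $Spr(\beta)$ iff $\forall s[\beta(s)=0\leftrightarrow\exists n[\beta(s\ast\langle n\rangle)=0]]$. For $\alpha\in\mathcal{F}_\beta$: $\alpha$ is an isolated point of $\mathcal{F}_\beta$ iff $\exists n\forall\gamma\in\mathcal{F}_\beta[\overline{\alpha}n\sqsubset\gamma\rightarrow\alpha=\gamma]$; $\alpha$ is a decidable point of $\mathcal{F}_\beta$ iff $\forall\gamma\in\mathcal{F}_\beta[\alpha=\gamma\vee\neg(\alpha=\gamma)]$, i.e. $(\mathcal{F}_\beta,=)\models D[\alpha]$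 where $D(\mathsf{x})$ is the formula $\forall\mathsf{y}[\mathsf{x}=\mathsf{y}\vee\neg(\mathsf{x}=\mathsf{y})]$. A subset $X$ of $\mathcal{F}_\beta$ is definable in $(\mathcal{F}_\beta,=)$ if there is a first-order formula $\varphi(\mathsf{x})$ in the language with only $=$ such that $X=\{\alpha\in\mathcal{F}_\beta\mid(\mathcal{F}_\beta,=)\models\varphi[\alpha]\}$ (satisfaction read intuitionistically). *)

(* Intuitionistic: no classical axioms are used anywhere. *)
From Stdlib Require Import List Arith.
Import ListNotations.

Definition Baire := nat -> nat.

(* Finite sequences are represented directly as lists of naturals
   (instead of naturals coding them). *)
Definition fseq := list nat.

Definition prefix (a : Baire) (m : nat) : fseq := map a (seq 0 m).

Definition initseg (s : fseq) (g : Baire) : Prop := prefix g (length s) = s.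

Definition beq (a b : Baire) : Prop := forall n, a n = b n.

Definition BCP : Prop :=
  forall R : Baire -> nat -> Prop,
    (forall a, exists n, R a n) ->
    forall a, exists m n, forall b, initseg (prefix a m) b -> R b n.

Definition inF (beta : fseq -> nat) (a : Baire) : Prop :=
  forall n, beta (prefix a n) = 0.

Definition Spr (beta : fseq -> nat) : Prop :=
  forall s, beta s = 0 <-> exists n, beta (s ++ [n]) = 0.

Definition isolated (beta : fseq -> nat) (a : Baire) : Prop :=
  exists n, forall g, inF beta g -> initseg (prefix a n) g -> beq a g.

Definition decidable_point (beta : fseq -> nat) (a : Baire) : Prop :=
  forall g, inF beta g -> beq a g \/ ~ beq a g.

Inductive form : Type :=
| fEq  : nat -> nat -> form
| fBot : form
| fAnd : form -> form -> form
| fOr  : form -> form -> form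
| fImp : form -> form -> form
| fAll : form -> form
| fEx  : form -> form.

Fixpoint fv_below (k : nat) (f : form) : Prop :=
  match f with
  | fEq i j => i < k /\ j < k
  | fBot => True
  | fAnd p q | fOr p q | fImp p q => fv_below k p /\ fv_below k q
  | fAll p | fEx p => fv_below (S k) p
  end.

Definition scons {D : Type} (x : D) (e : nat -> D) : nat -> D :=
  fun n => match n with 0 => x | S m => e m end.

Definition FDom (beta : fseq -> nat) : Type := { a : Baire | inF beta a }.

Fixpoint sat (beta : fseq -> nat) (e : nat -> FDom beta) (f : form) : Prop :=
  match f with
  | fEq i j => beq (proj1_sig (e i)) (proj1_sig (e j))
  | fBot => False
  | fAnd p q => sat beta e p /\ sat beta e q
  | fOr p q => sat beta e p \/ sat beta e q
  | fImp p q => sat beta e p -> sat beta e q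
  | fAll p => forall x : FDom beta, sat beta (scons x e) p
  | fEx p => exists x : FDom beta, sat beta (scons x e) p
  end.

Definition definable (beta : fseq -> nat) (X : Baire -> Prop) : Prop :=
  exists phi : form, fv_below 1 phi /\
    forall (x : FDom beta) (e : nat -> FDom beta),
      sat beta (scons x e) phi <-> X (proj1_sig x).

From Stdlib Require Import List Arith ConstructiveEpsilon Lia.
Import ListNotations.

(* An isolated point a is decidable, because equality of the finite prefixes
   of length n is decidable.  Conversely, a spread F_beta is a retract of
   Baire space: the retraction copies g as long as g stays in the spread and
   otherwise continues with the least admissible value.  If a is a decidable
   point, then "a = r g or not" is a total decision on all of Baire space, so
   by the continuity principle its answer is constant on a neighbourhood of a;
   as r is the identity on F_beta, this neighbourhood meets F_beta only in a.
   Therefore the isolated points are exactly those satisfying the formula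
   forall y, (x = y \/ ~ x = y). *)

Lemma prefix_S (a : Baire) (n : nat) : prefix a (S n) = prefix a n ++ [a n].
Proof. unfold prefix. rewrite seq_S, map_app. reflexivity. Qed.

Lemma length_prefix (a : Baire) (n : nat) : length (prefix a n) = n.
Proof. unfold prefix. rewrite length_map, length_seq. reflexivity. Qed.

Lemma prefix_ext (a g : Baire) (n : nat) : beq a g -> prefix a n = prefix g n.
Proof. intro Hag. unfold prefix. apply map_ext. exact Hag. Qed.

Lemma initseg_prefix (a g : Baire) (n : nat) :
  initseg (prefix a n) g <-> prefix g n = prefix a n.
Proof. unfold initseg. rewrite length_prefix. reflexivity. Qed.

Lemma isolated_decidable_point (beta : fseq -> nat) (a : Baire) :
  isolated beta a -> decidable_point beta a.
Proof.
  intros [n Hn] g Hg.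
  destruct (list_eq_dec Nat.eq_dec (prefix g n) (prefix a n)) as [Heq | Hneq].
  - left. apply Hn; [exact Hg | apply initseg_prefix; exact Heq].
  - right. intro Hag. apply Hneq. symmetry. apply prefix_ext. exact Hag.
Qed.

Section SpreadRetraction.

Variable beta : fseq -> nat.
Hypothesis Hspr : Spr beta.

(* The disjunct [beta s <> 0] makes a successor exist also for [s] outside
   the spread, so the search for the least one is total. *)
Definition admissible_successor (s : fseq) (m : nat) : Prop :=
  beta s <> 0 \/ beta (s ++ [m]) = 0.

Lemma admissible_successor_dec (s : fseq) (m : nat) :
  {admissible_successor s m} + {~ admissible_successor s m}.
Proof.
  unfold admissible_successor.
  destruct (Nat.eq_dec (beta (s ++ [m])) 0) as [Hm | Hm]; [now left; right |].
  destruct (Nat.eq_dec (beta s) 0) as [Hs | Hs]; [| now left; left].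
  right. intros [H | H]; contradiction.
Qed.

Lemma admissible_successor_exists (s : fseq) : exists m, admissible_successor s m.
Proof.
  unfold admissible_successor.
  destruct (Nat.eq_dec (beta s) 0) as [Hs | Hs].
  - apply Hspr in Hs as [m Hm]. exists m. now right.
  - exists 0. now left.
Qed.

Definition spread_successor (s : fseq) : nat :=
  proj1_sig (constructive_indefinite_ground_description_nat _
               (admissible_successor_dec s) (admissible_successor_exists s)).

Lemma spread_successorP (s : fseq) : admissible_successor s (spread_successor s).
Proof. exact (proj2_sig (constructive_indefinite_ground_description_nat _ _ _)). Qed.

Fixpoint retract_prefix (g : Baire) (n : nat) : fseq :=
  match n with
  | 0 => []
  | S k =>
      let s := retract_prefix g k in
      s ++ [if Nat.eq_dec (beta (s ++ [g k])) 0 then g k else spread_successor s]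
  end.

Definition retract (g : Baire) : Baire := fun n => last (retract_prefix g (S n)) 0.

Lemma prefix_retract (g : Baire) (n : nat) : prefix (retract g) n = retract_prefix g n.
Proof.
  induction n as [| n IH]; [reflexivity |].
  rewrite prefix_S, IH. unfold retract. simpl. rewrite last_last. reflexivity.
Qed.

Lemma retract_inF (g : Baire) : beta [] = 0 -> inF beta (retract g).
Proof.
  intros Hnil n. rewrite prefix_retract.
  induction n as [| n IH]; [exact Hnil |]. simpl.
  destruct Nat.eq_dec as [Hg | _]; [exact Hg |].
  destruct (spread_successorP (retract_prefix g n)); [contradiction | assumption].
Qed.

Lemma retract_id (g : Baire) : inF beta g -> beq (retract g) g.
Proof.
  intros Hg.
  assert (Hpre : forall n, retract_prefix g n = prefix g n).
  { induction n as [| n IH]; [reflexivity |]. simpl. rewrite IH, prefix_S.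
    destruct Nat.eq_dec as [_ | Hne]; [reflexivity |].
    exfalso. apply Hne. rewrite <- prefix_S. apply Hg. }
  intro n. unfold retract. rewrite Hpre, prefix_S, last_last. reflexivity.
Qed.

End SpreadRetraction.

Lemma decidable_point_isolated (Hbcp : BCP) (beta : fseq -> nat) (Hspr : Spr beta)
  (a : Baire) : inF beta a -> decidable_point beta a -> isolated beta a.
Proof.
  intros Ha Hdec.
  set (r := retract beta Hspr).
  set (R := fun g k => k = 0 <-> beq a (r g)).
  assert (Htot : forall g, exists k, R g k).
  { intro g. destruct (Hdec (r g) (retract_inF beta Hspr g (Ha 0))) as [Heq | Hne].
    - exists 0. split; auto.
    - exists 1. split; [discriminate | contradiction]. }
  destruct (Hbcp R Htot a) as [m [k Hk]].
  assert (Hk0 : k = 0).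
  { apply (Hk a); [apply initseg_prefix; reflexivity |].
    intro i. symmetry. apply retract_id. exact Ha. }
  exists m. intros g Hg Hgm i.
  rewrite (proj1 (Hk g Hgm) Hk0 i). apply retract_id. exact Hg.
Qed.

Lemma definable_ext (beta : fseq -> nat) (X Y : Baire -> Prop) :
  (forall a, inF beta a -> (X a <-> Y a)) -> definable beta X -> definable beta Y.
Proof.
  intros HXY [phi [Hfv Hphi]]. exists phi. split; [exact Hfv |].
  intros x e. rewrite Hphi. apply HXY, proj2_sig.
Qed.

Definition decidable_point_form : form := fAll (fOr (fEq 1 0) (fImp (fEq 1 0) fBot)).

Lemma definable_decidable_point (beta : fseq -> nat) :
  definable beta (decidable_point beta).
Proof.
  exists decidable_point_form. split; [simpl; lia |].
  intros x e. split.
  - intros H g Hg. exact (H (exist _ g Hg)).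
  - intros H [g Hg]. exact (H g Hg).
Qed.

Theorem lemma5p3 (Hbcp : BCP) (beta : fseq -> nat) (Hspr : Spr beta) :
  (forall a : Baire, inF beta a -> (isolated beta a <-> decidable_point beta a))
  /\ definable beta (isolated beta).
Proof.
  assert (Hiff : forall a, inF beta a -> (isolated beta a <-> decidable_point beta a)).
  { intros a Ha. split.
    - apply isolated_decidable_point.
    - apply (decidable_point_isolated Hbcp beta Hspr a Ha). }
  split; [exact Hiff |].
  apply (definable_ext beta (decidable_point beta)).
  - intros a Ha. symmetry. exact (Hiff a Ha).
  - apply definable_decidable_point.
Qed.
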